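(* Assume $C^\top C\succ0$, and let $\gamma>0$, $\sigma>0$, $\lambda>0$. Let $(\widetilde W_r,y_r)_{r\ge0}$ be generated by the alternating scheme described in the context from a feasible initial point $\widetilde W_0\in\mathcal{X}_1$, $y_0\in\mathbb{R}^{mn}_+$. Then $H_\sigma(\widetilde W_{r+1})\le H_\sigma(\widetilde W_r)$ for all $r\ge0$.
   Context: Let $n,m,M\ge1$, $p=m+n$. For $i=1,\dots,M$ let $A_i\in\mathbb{R}^{n\times n}$, $B_{2,i}\in\mathbb{R}^{n\times m}$, $F_i=\begin{bmatrix}A_i&B_{2,i}\\0&0\end{bmatrix}$. Let $B_1\in\mathbb{R}^{n\times l}$, $C\in\mathbb{R}^{q\times n}$, $D\in\mathbb{R}^{q\times m}$ with $C^\top D=0$, $D^\top D\succ0$, $B_1B_1^\top\succ0$; $Q=\begin{bmatrix}B_1B_1^\top&0\\0&0\end{bmatrix}$, $R=\begin{bmatrix}C^\top C&0\\0&D^\top D\end{bmatrix}$, $V_1=[0,\ I_m]$, $V_2=[I_n,\ 0]$, $\Psi_i(W)=-V_2(F_iW+WF_i^\top+Q)V_2^\top$. $\mathrm{vec}$ is column-stacking; $\mathcal{P}:=V_2\otimes V_1$, so $\mathcal{P}\,\mathrm{vec}(W)=\mathrm{vec}(V_1WV_2^\top)\in\mathbb{R}^{mn}$. $\Gamma^k_+=\{\mathrm{vec}(X):X\in\mathbb{S}^k_+\}$, $\delta_S$ the indicator of $S$, $\Omega=\{\mathrm{vec}(W):W_{ij}=0,\ 1\le i<j\le n\}$, $\mathcal{X}_1=\{\mathrm{vec}(W)\in\Gamma^p_+:\mathrm{vec}(\Psi_i(W))\in\Gamma^n_+\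 \forall i,\ \mathrm{vec}(W)\in\Omega\}$, and $r_1(\widetilde W)=\langle\mathrm{vec}(R),\widetilde W\rangle+\delta_{\mathcal{X}_1}(\widetilde W)$. For $x\in\mathbb{R}^{mn}$, $f_\sigma(x)=\sum_\ell(1-e^{-x_\ell/\sigma})$, $g_\sigma=-f_\sigma$, $g_\sigma^*$ its convex conjugate; $|\cdot|$ is componentwise. $H_\sigma(\widetilde W)=r_1(\widetilde W)+\gamma f_\sigma(|\mathcal{P}\widetilde W|)$. Scheme: for $r=1,2,\dots$: if $r$ is odd, set $\widetilde W_r=\widetilde W_{r-1}$ and $y_r=\operatorname{argmin}_{y\in\mathbb{R}^{mn}_+}\{\gamma g_\sigma^*(-y)+\gamma y^\top|\mathcal{P}\widetilde W_{r-1}|\}=\nabla f_\sigma(|\mathcal{P}\widetilde W_{r-1}|)$; if $r$ is even, set $y_r=y_{r-1}$ and $\widetilde W_r\in\operatorname{argmin}_{\widetilde W\in\mathcal{X}_1}\{\langle\mathrm{vec}(R),\widetilde W\rangle+\gamma y_{r-1}^\top|\mathcal{P}\widetilde W|+\frac1{2\lambda}\|\widetilde W-\widetilde W_{r-1}\|^2\}$. *)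

From HB Require Import structures.
From mathcomp Require Import all_boot all_order all_algebra.
From mathcomp Require Import boolp classical_sets reals ereal.
From mathcomp Require Import sequences exp.
Unset Printing Implicit Defensive.
Import Order.TTheory GRing.Theory Num.Theory.
Local Open Scope ring_scope.

Section Defs.
Context {R : realType}.

(* column-stacking vectorisation: vec A has entry A i j at index j*a + i *)
Definition vec {a b : nat} (A : 'M[R]_(a, b)) : 'cV[R]_(b * a) := (mxvec A^T)^T.
Definition unvec {a b : nat} (w : 'cV[R]_(b * a)) : 'M[R]_(a, b) := (vec_mx w^T)^T.

(* Kronecker product (A ⊗ B)_{(iA,iB),(jA,jB)} = A iA jA * B iB jB, with the
   standard index (iA,iB) |-> iA * c + iB  (= mxvec_index iA iB) *)
Definition kron {a b c d : nat} (A : 'M[R]_(a, b)) (B : 'M[R]_(c, d))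
  : 'M[R]_(a * c, b * d) :=
  \matrix_(r, s) \sum_(iA < a) \sum_(iB < c) \sum_(jA < b) \sum_(jB < d)
     (if (r == mxvec_index iA iB) && (s == mxvec_index jA jB)
      then A iA jA * B iB jB else 0).

Definition psd {k : nat} (X : 'M[R]_k) : Prop :=
  X^T = X /\ forall x : 'cV[R]_k, 0 <= (x^T *m X *m x) 0 0.
Definition pd {k : nat} (X : 'M[R]_k) : Prop :=
  X^T = X /\ forall x : 'cV[R]_k, x != 0 -> 0 < (x^T *m X *m x) 0 0.

Definition Gamma_plus (k : nat) : set 'cV[R]_(k * k) :=
  [set v | exists X : 'M[R]_k, psd X /\ v = vec X].

Definition nonneg_vec {k : nat} (y : 'cV[R]_k) : Prop := forall i, 0 <= y i 0.

Definition absv {k : nat} (x : 'cV[R]_k) : 'cV[R]_k := map_mx (fun t => `|t|) x.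

Definition inner {k : nat} (u v : 'cV[R]_k) : R := (u^T *m v) 0 0.
Definition sqnorm {k : nat} (u : 'cV[R]_k) : R := inner u u.

Definition f_sigma {k : nat} (sigma : R) (x : 'cV[R]_k) : R :=
  \sum_(l < k) (1 - expR (- (x l 0) / sigma)).
Definition grad_f_sigma {k : nat} (sigma : R) (x : 'cV[R]_k) : 'cV[R]_k :=
  \col_l (expR (- (x l 0) / sigma) / sigma).

Definition indicator {T : Type} (S : set T) (x : T) : \bar R :=
  if `[< S x >] then 0%E else +oo%E.

Definition Fmat {n m : nat} (A : 'M[R]_n) (B2 : 'M[R]_(n, m)) : 'M[R]_(n + m) :=
  block_mx A B2 0 0.
Definition Qmat {n l : nat} (m : nat) (B1 : 'M[R]_(n, l)) : 'M[R]_(n + m) :=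
  block_mx (B1 *m B1^T) 0 0 (0 : 'M[R]_m).
Definition Rmat {n m q : nat} (C : 'M[R]_(q, n)) (D : 'M[R]_(q, m)) : 'M[R]_(n + m) :=
  block_mx (C^T *m C) 0 0 (D^T *m D).
Definition V1 (n m : nat) : 'M[R]_(m, n + m) := row_mx 0 1%:M.
Definition V2 (n m : nat) : 'M[R]_(n, n + m) := row_mx 1%:M 0.

Definition Psi {n m l : nat} (A : 'M[R]_n) (B2 : 'M[R]_(n, m)) (B1 : 'M[R]_(n, l))
  (W : 'M[R]_(n + m)) : 'M[R]_n :=
  - (V2 n m *m (Fmat A B2 *m W + W *m (Fmat A B2)^T + Qmat m B1) *m (V2 n m)^T).

Definition Pmat (n m : nat) : 'M[R]_(n * m, (n + m) * (n + m)) := kron (V2 n m) (V1 n m).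

Definition Omega (n m : nat) : set 'cV[R]_((n + m) * (n + m)) :=
  [set w | forall i j : 'I_(n + m), (i < j)%N -> (j < n)%N -> unvec w i j = 0].

Definition X1 {n m l M : nat} (A : 'I_M -> 'M[R]_n) (B2 : 'I_M -> 'M[R]_(n, m))
  (B1 : 'M[R]_(n, l)) : set 'cV[R]_((n + m) * (n + m)) :=
  [set w | Gamma_plus (n + m) w
           /\ (forall i, Gamma_plus n (vec (Psi (A i) (B2 i) B1 (unvec w))))
           /\ Omega n m w].

Definition r1 {n m l q M : nat} (A : 'I_M -> 'M[R]_n) (B2 : 'I_M -> 'M[R]_(n, m))
  (B1 : 'M[R]_(n, l)) (C : 'M[R]_(q, n)) (D : 'M[R]_(q, m))
  (w : 'cV[R]_((n + m) * (n + m))) : \bar R :=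
  ((inner (vec (Rmat C D)) w)%:E + indicator (X1 A B2 B1) w)%E.

Definition H_sigma {n m l q M : nat} (A : 'I_M -> 'M[R]_n) (B2 : 'I_M -> 'M[R]_(n, m))
  (B1 : 'M[R]_(n, l)) (C : 'M[R]_(q, n)) (D : 'M[R]_(q, m)) (gamma sigma : R)
  (w : 'cV[R]_((n + m) * (n + m))) : \bar R :=
  (r1 A B2 B1 C D w + (gamma * f_sigma sigma (absv (Pmat n m *m w)))%:E)%E.

Definition prox_obj {n m : nat} {q : nat} (C : 'M[R]_(q, n)) (D : 'M[R]_(q, m))
  (gamma lambda : R) (y : 'cV[R]_(n * m)) (wprev w : 'cV[R]_((n + m) * (n + m))) : R :=
  inner (vec (Rmat C D)) w + gamma * inner y (absv (Pmat n m *m w))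
  + (2 * lambda)^-1 * sqnorm (w - wprev).

End Defs.

(* A majorize-minimize argument.  Each summand 1 - exp(-t/σ) of f_σ is concave,
   so f_σ lies below its tangent at |𝒫 W̃_r|; after an odd step y_r is exactly
   the slope of that tangent, so the objective of the following proximal step,
   evaluated at any feasible W̃, dominates H_σ(W̃) up to the nonnegative proximal
   term, with equality at W̃ = W̃_r.  Minimality of W̃_(r+1), tested against the
   feasible W̃_r, then gives the descent; odd steps leave W̃ unchanged. *)
From HB Require Import structures.
From mathcomp Require Import all_boot all_order all_algebra.
From mathcomp Require Import boolp classical_sets reals ereal.
From mathcomp Require Import sequences exp.
From mathcomp Require Import ring lra.
Import Order.TTheory GRing.Theory Num.Theory.
Local Open Scope ring_scope.

Section Descent.
Context {R : realType}.

Section Inner.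
Variable k : nat.
Implicit Types u v w : 'cV[R]_k.

Lemma innerE u v : inner u v = \sum_(i < k) u i 0 * v i 0.
Proof. by rewrite /inner !mxE; apply: eq_bigr => i _; rewrite mxE. Qed.

Lemma innerBr u v w : inner u (v - w) = inner u v - inner u w.
Proof. by rewrite /inner mulmxBr !mxE. Qed.

Lemma sqnorm_ge0 u : 0 <= sqnorm u.
Proof. by rewrite /sqnorm innerE; apply: sumr_ge0 => i _; rewrite -expr2 sqr_ge0. Qed.

Lemma sqnorm0 : sqnorm (0 : 'cV[R]_k) = 0.
Proof. by rewrite /sqnorm innerE big1 // => i _; rewrite mxE mul0r. Qed.

End Inner.

Lemma expR_ge_tangent (x y : R) : expR y * (1 + (x - y)) <= expR x.
Proof.
by rewrite -[in leRHS](subrK y x) expRD mulrC ler_wpM2r ?expR_ge0 ?expR_ge1Dx.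
Qed.

(* No sign condition on σ: 1 - exp(c t) is concave in t for every c. *)
Lemma f_sigma_le_tangent (k : nat) (sigma : R) (a b : 'cV[R]_k) :
  f_sigma sigma a <= f_sigma sigma b + inner (grad_f_sigma sigma b) (a - b).
Proof.
rewrite /f_sigma innerE -big_split /=; apply: ler_sum => i _.
rewrite !mxE; set E := expR (- b i 0 / sigma).
have := expR_ge_tangent (- a i 0 / sigma) (- b i 0 / sigma).
rewrite -/E => tangent.
suff -> : E / sigma * (a i 0 - b i 0) = - (E * (- a i 0 / sigma - - b i 0 / sigma)).
  by lra.
by rewrite /E; ring.
Qed.

Lemma H_sigmaE (n m M l q : nat)
  (A : 'I_M -> 'M[R]_n) (B2 : 'I_M -> 'M[R]_(n, m))
  (B1 : 'M[R]_(n, l)) (C : 'M[R]_(q, n)) (D : 'M[R]_(q, m)) (gamma sigma : R)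
  (w : 'cV[R]_((n + m) * (n + m))) :
  X1 A B2 B1 w ->
  H_sigma A B2 B1 C D gamma sigma w =
  (inner (vec (Rmat C D)) w + gamma * f_sigma sigma (absv (Pmat n m *m w)))%:E.
Proof. by move=> Xw; rewrite /H_sigma /r1 /indicator asboolT // adde0 EFinD. Qed.

Lemma prox_obj_id (n m q : nat) (C : 'M[R]_(q, n))
  (D : 'M[R]_(q, m)) (gamma lambda : R) (y : 'cV[R]_(n * m))
  (w : 'cV[R]_((n + m) * (n + m))) :
  prox_obj C D gamma lambda y w w
  = inner (vec (Rmat C D)) w + gamma * inner y (absv (Pmat n m *m w)).
Proof. by rewrite /prox_obj subrr sqnorm0 mulr0 addr0. Qed.

Lemma H_sigma_prox_step_le {n m M l q : nat}
  {A : 'I_M -> 'M[R]_n} {B2 : 'I_M -> 'M[R]_(n, m)}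
  {B1 : 'M[R]_(n, l)} {C : 'M[R]_(q, n)} {D : 'M[R]_(q, m)}
  {gamma sigma lambda : R} {w w' : 'cV[R]_((n + m) * (n + m))} :
  0 <= gamma -> 0 <= lambda ->
  X1 A B2 B1 w -> X1 A B2 B1 w' ->
  let y := grad_f_sigma sigma (absv (Pmat n m *m w)) in
  prox_obj C D gamma lambda y w w' <= prox_obj C D gamma lambda y w w ->
  (H_sigma A B2 B1 C D gamma sigma w' <= H_sigma A B2 B1 C D gamma sigma w)%E.
Proof.
move=> gamma_ge0 lambda_ge0 Xw Xw' y.
rewrite prox_obj_id /prox_obj !H_sigmaE // lee_fin => step.
have prox_ge0 : 0 <= (2 * lambda)^-1 * sqnorm (w' - w).
  by rewrite mulr_ge0 ?sqnorm_ge0 // invr_ge0 mulr_ge0.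
have tangent : gamma * f_sigma sigma (absv (Pmat n m *m w'))
    <= gamma * f_sigma sigma (absv (Pmat n m *m w))
       + gamma * (inner y (absv (Pmat n m *m w')) - inner y (absv (Pmat n m *m w))).
  by rewrite -mulrDr -innerBr ler_wpM2l // f_sigma_le_tangent.
lra.
Qed.

End Descent.

Theorem lemma27 (R : realType) (n m M l q : nat)
  (hn : (1 <= n)%N) (hm : (1 <= m)%N) (hM : (1 <= M)%N)
  (A : 'I_M -> 'M[R]_n) (B2 : 'I_M -> 'M[R]_(n, m))
  (B1 : 'M[R]_(n, l)) (C : 'M[R]_(q, n)) (D : 'M[R]_(q, m))
  (hCD : C^T *m D = 0) (hDD : pd (D^T *m D)) (hBB : pd (B1 *m B1^T))
  (hCC : pd (C^T *m C))
  (gamma sigma lambda : R) (hgamma : 0 < gamma) (hsigma : 0 < sigma)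
  (hlambda : 0 < lambda)
  (Wt : nat -> 'cV[R]_((n + m) * (n + m))) (y : nat -> 'cV[R]_(n * m))
  (hW0 : X1 A B2 B1 (Wt 0%N)) (hy0 : nonneg_vec (y 0%N))
  (hstep : forall k : nat,
     (odd k.+1 ->
        Wt k.+1 = Wt k /\
        y k.+1 = grad_f_sigma sigma (absv (Pmat n m *m Wt k))) /\
     (~~ odd k.+1 ->
        y k.+1 = y k /\
        X1 A B2 B1 (Wt k.+1) /\
        (forall W, X1 A B2 B1 W ->
           prox_obj C D gamma lambda (y k) (Wt k) (Wt k.+1)
           <= prox_obj C D gamma lambda (y k) (Wt k) W))) :
  forall r : nat,
    (H_sigma A B2 B1 C D gamma sigma (Wt r.+1)
     <= H_sigma A B2 B1 C D gamma sigma (Wt r))%E.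
Proof.
have feasible k : X1 A B2 B1 (Wt k).
  elim: k => [//|k IHk]; have [odd_step even_step] := hstep k.
  by case: (boolP (odd k.+1)) => [/odd_step[-> _] | /even_step[_ []]].
case=> [|k]; first by have [-> _] := (hstep 0%N).1 isT.
case: (boolP (odd k.+1)) => [odd_k1 | even_k1]; last first.
  by have [-> _] := (hstep k.+1).1 even_k1.
have [Wk1 yk1] := (hstep k).1 odd_k1.
have even_k2 : ~~ odd k.+2 by rewrite /= negbK.
have [_ [X_k2 min_k2]] := (hstep k.+1).2 even_k2.
apply: (H_sigma_prox_step_le (ltW hgamma) (ltW hlambda) (feasible k.+1) X_k2).
rewrite -Wk1 in yk1; rewrite -yk1.
exact: min_k2 (feasible k.+1).
Qed.
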